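(* Let $n\geq 1$ and let $X_n$ and $S_1,\dots,S_n$ be as described in the context. If $A$ is a dense subset of $X_n$, then there exists $i\in\{1,\dots,n\}$ such that $A\cap S_i$ is non-empty and open in the subspace $S_i$.
   Context: Let $\mathcal{U}$ be a non-principal ultrafilter on $\omega$, and let $E$ be the space with underlying set $\omega$ whose open sets are the members of $\mathcal{U}$ together with $\emptyset$. For $n\ge 1$, let $X_n$ be the space with underlying set $\omega\times\{1,\dots,n\}$ whose open sets are $\emptyset$ together with all sets of the form $\bigcup_{i=1}^n (O_i\times\{i\})$ where each $O_i$ is a non-empty open subset of $E$. Let $S_i=\omega\times\{i\}$ with the subspace topology from $X_n$. *)

From mathcomp Require Import all_boot.
From mathcomp Require Import boolp classical_sets.
Set Implicit Arguments. Unset Strict Implicit. Unset Printing Implicit Defensive.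
Local Open Scope classical_set_scope.

Definition is_ultrafilter (U : set (set nat)) : Prop :=
  [/\ ~ U set0,
      U setT,
      (forall A B : set nat, U A -> A `<=` B -> U B),
      (forall A B : set nat, U A -> U B -> U (A `&` B)) &
      (forall A : set nat, U A \/ U (~` A))].

Definition non_principal (U : set (set nat)) : Prop :=
  ~ exists a : nat, U = [set A | A a].

Definition E_open (U : set (set nat)) (O : set nat) : Prop := U O \/ O = set0.

(* The space X_n, with underlying set omega x {1,...,n}; the index
   i : 'I_n stands for the coordinate i+1. *)
Definition Xn_open (U : set (set nat)) (n : nat) (W : set (nat * 'I_n)) : Prop :=
  W = set0 \/
  exists O : 'I_n -> set nat,
    (forall i, E_open U (O i) /\ O i !=set0) /\
    W = [set p | O p.2 p.1].

Definition S_ (n : nat) (i : 'I_n) : set (nat * 'I_n) := [set p | p.2 = i].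

Definition Xn_dense (U : set (set nat)) (n : nat) (A : set (nat * 'I_n)) : Prop :=
  forall W, Xn_open U W -> W !=set0 -> (A `&` W) !=set0.

Definition open_in_S (U : set (set nat)) (n : nat) (i : 'I_n)
  (V : set (nat * 'I_n)) : Prop :=
  V `<=` S_ i /\ exists W, Xn_open U W /\ V = W `&` S_ i.

(* Write A_i for the slice {k | (k, i) \in A}.  If some A_i lies in the
   ultrafilter, then A meets S_i exactly in the trace of the open set
   (A_i x {i}) \cup (omega x the other indices).  Otherwise every complement
   ~A_i lies in the ultrafilter, and the open set \bigcup_i (~A_i x {i}) is
   non-empty and misses A, so A is not dense. *)

From mathcomp Require Import all_boot.
From mathcomp Require Import boolp classical_sets.
Set Implicit Arguments. Unset Strict Implicit. Unset Printing Implicit Defensive.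
Local Open Scope classical_set_scope.

Section UltrafilterXn.

Variable U : set (set nat).
Hypothesis hU : is_ultrafilter U.

Lemma ultrafilter_neq0 (X : set nat) : U X -> X !=set0.
Proof.
case: hU => U_neq0 _ _ _ _ UX; apply/set0P/eqP => X0.
by apply: U_neq0; rewrite -X0.
Qed.

Lemma ultrafilter_setC (X : set nat) : ~ U X -> U (~` X).
Proof. by case: hU => _ _ _ _ /(_ X) []. Qed.

Lemma Xn_open_fibers (n : nat) (O : 'I_n -> set nat) :
  (forall i, U (O i)) -> Xn_open U [set p | O p.2 p.1].
Proof.
move=> UO; right; exists O; split=> // i.
by split; [left | apply: ultrafilter_neq0].
Qed.

Definition slice (n : nat) (A : set (nat * 'I_n)) (i : 'I_n) : set nat :=
  [set k | A (k, i)].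

Lemma open_in_S_slice (n : nat) (A : set (nat * 'I_n)) (i : 'I_n) :
  U (slice A i) -> open_in_S U i (A `&` S_ i).
Proof.
move=> UAi; split; first by move=> p [].
have UT : U setT by case: hU.
pose O j := if j == i then slice A i else setT.
exists [set p | O p.2 p.1]; split.
  by apply: Xn_open_fibers => j; rewrite /O; case: eqP.
apply/seteqP; split=> -[k j] [Akj]; rewrite /S_ /= => ji; subst j.
- by split=> //; rewrite /O /= eqxx.
- by split=> //; move: Akj; rewrite /O /= eqxx.
Qed.

Lemma Xn_dense_slice (n : nat) (A : set (nat * 'I_n)) :
  (0 < n)%N -> Xn_dense U A -> exists i, U (slice A i).
Proof.
move=> n_gt0 denseA; apply: contrapT => no_slice.
have UC i : U (~` slice A i).
  by apply: ultrafilter_setC => UAi; apply: no_slice; exists i.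
have [k Ck] := ultrafilter_neq0 (UC (Ordinal n_gt0)).
have [[m j] [Amj Cmj]] : A `&` [set p | (~` slice A p.2) p.1] !=set0.
  by apply: denseA; [exact: (Xn_open_fibers UC) | exists (k, Ordinal n_gt0)].
exact: Cmj.
Qed.

End UltrafilterXn.

Theorem lemma6 (U : set (set nat)) (hU : is_ultrafilter U) (hnp : non_principal U)
  (n : nat) (hn : (1 <= n)%N) (A : set (nat * 'I_n)) :
  Xn_dense U A ->
  exists i : 'I_n, (A `&` S_ i) !=set0 /\ open_in_S U i (A `&` S_ i).
Proof.
move=> denseA; have [i UAi] := Xn_dense_slice hU hn denseA.
have [k Ak] := ultrafilter_neq0 hU UAi.
by exists i; split; [exists (k, i) | exact: open_in_S_slice].
Qed.
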